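(* Let $r\ge 1$ and let $M$ be a multigraph with $n$ nodes and at most $n-\frac{n}{r}$ edges. Then $M$ has a connected component with $k$ nodes and exactly $k-1$ edges for some $k$ with $1\le k\le r$. *)

From HB Require Import structures.
From mathcomp Require Import all_boot all_order all_algebra.
Set Implicit Arguments. Unset Strict Implicit. Unset Printing Implicit Defensive.
Import Order.TTheory GRing.Theory Num.Theory.

(* A (finite) multigraph on node set V with edge set E: edge e joins the
   nodes s e and t e.  Parallel edges are allowed (E is an arbitrary finite
   type); loops (s e = t e) are also allowed. *)

Definition mg_adj (V E : finType) (s t : E -> V) : rel V :=
  fun x y => [exists e, ((s e == x) && (t e == y)) || ((s e == y) && (t e == x))].

Definition mg_comp (V E : finType) (s t : E -> V) (x : V) : {set V} :=
  [set y | connect (mg_adj s t) x y].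

Definition mg_edges_in (V E : finType) (s t : E -> V) (C : {set V}) : {set E} :=
  [set e | (s e \in C) && (t e \in C)].

From HB Require Import structures.
From mathcomp Require Import all_boot all_order all_algebra.
From mathcomp Require Import lra.
Import Order.TTheory GRing.Theory Num.Theory.
Set Implicit Arguments. Unset Strict Implicit. Unset Printing Implicit Defensive.

Local Open Scope ring_scope.

(* Give every node x the weight e(C)/|C|, where C is its component, with |C|
   nodes and e(C) edges.  The weights of the nodes of C add up to e(C), so the
   total weight is the number of edges.  Connectivity forces e(C) >= |C| - 1;
   hence a component that is not a tree has weight >= 1 per node, and a tree
   with more than r nodes has weight 1 - 1/|C| > 1 - 1/r per node.  If no
   component were a tree with at most r nodes, the multigraph would thus have
   more than n - n/r edges. *)

Section Components.

Variables (V E : finType) (s t : E -> V).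

Local Notation adj := (mg_adj s t).
Local Notation comp := (mg_comp s t).
Local Notation edges_in := (mg_edges_in s t).

Lemma mg_adj_sym : symmetric adj.
Proof. by move=> x y; apply/existsP/existsP => -[e He]; exists e; rewrite orbC. Qed.

Lemma mg_adj_edge (e : E) : adj (s e) (t e).
Proof. by apply/existsP; exists e; rewrite !eqxx. Qed.

Lemma mg_comp_refl x : x \in comp x.
Proof. by rewrite inE connect0. Qed.

Lemma mg_comp_sym x y : (y \in comp x) = (x \in comp y).
Proof. by rewrite !inE (sym_connect_sym mg_adj_sym). Qed.

Lemma mg_comp_eq x y : y \in comp x -> comp y = comp x.
Proof.
rewrite inE => xy; apply/setP => z.
by rewrite !inE (same_connect (sym_connect_sym mg_adj_sym) xy).
Qed.

Lemma mg_comp_adj x a b : adj a b -> a \in comp x -> b \in comp x.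
Proof. by rewrite !inE => ab xa; apply: connect_trans xa (connect1 ab). Qed.

Lemma card_mg_comp_gt0 x : (0 < #|comp x|)%N.
Proof. by apply/card_gt0P; exists x; apply: mg_comp_refl. Qed.

Lemma mem_mg_edges_in_comp x e : (e \in edges_in (comp x)) = (x \in comp (s e)).
Proof.
rewrite inE (mg_comp_sym (s e)); case xse: (s e \in comp x) => //=.
exact: mg_comp_adj (mg_adj_edge e) xse.
Qed.

Lemma mg_comp_sub_closed x (A : {set V}) :
  x \in A -> (forall e, (s e \in A) = (t e \in A)) -> comp x \subset A.
Proof.
move=> xA noncrossing; apply/subsetP => y; rewrite inE => xy.
have closedA : closed adj A.
  apply: intro_closed; first exact: sym_connect_sym mg_adj_sym.
  move=> a b /existsP[e /orP[] /andP[/eqP <- /eqP <-]];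
    by rewrite noncrossing.
by rewrite -(closed_connect closedA xy).
Qed.

Lemma mg_edges_inS (A B : {set V}) : A \subset B -> edges_in A \subset edges_in B.
Proof.
move=> sAB; apply/subsetP => e.
by rewrite !inE => /andP[/(subsetP sAB) -> /(subsetP sAB)].
Qed.

Lemma mg_comp_grow x (A : {set V}) :
  x \in A -> A \proper comp x ->
  exists2 z, z \in comp x :\: A & (#|edges_in A| < #|edges_in (z |: A)|)%N.
Proof.
move=> xA /andP[sAC notsCA].
have [e crossing] : exists e, (s e \in A) != (t e \in A).
  apply/existsP; apply: contraNT notsCA; rewrite negb_exists => /forallP nc.
  by apply: mg_comp_sub_closed xA _ => e; apply/eqP; rewrite -[_ == _]negbK nc.
have new_edge z : z \notin A -> (s e \in z |: A) -> (t e \in z |: A) ->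
    (#|edges_in A| < #|edges_in (z |: A)|)%N.
  move=> zA sez tez; apply/proper_card/properP; split.
    by apply/mg_edges_inS/subsetUr.
  exists e; first by rewrite inE sez tez.
  by rewrite inE; move: crossing; case: (s e \in A).
move: crossing; case sA: (s e \in A) => /= tA.
- exists (t e); last by apply: new_edge; rewrite ?tA // !inE ?eqxx ?sA ?orbT.
  by rewrite inE tA (mg_comp_adj (mg_adj_edge e) (subsetP sAC _ sA)).
- have {}tA : t e \in A by move: tA; case: (t e \in A).
  exists (s e); last by apply: new_edge; rewrite ?sA // !inE ?eqxx ?tA ?orbT.
  by rewrite inE sA (mg_comp_adj _ (subsetP sAC _ tA)) // mg_adj_sym mg_adj_edge.
Qed.

Lemma mg_comp_connected_edges x : (#|comp x|.-1 <= #|edges_in (comp x)|)%N.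
Proof.
have spanning k : (k < #|comp x|)%N -> exists A : {set V},
    [/\ x \in A, A \subset comp x, #|A| = k.+1 & (k <= #|edges_in A|)%N].
  elim: k => [_ | k IH lt_k].
    by exists [set x]; rewrite set11 sub1set mg_comp_refl cards1.
  have [A [xA sAC cardA edgesA]] := IH (ltnW lt_k).
  have [|z /setDP[zC zA] more] := mg_comp_grow xA.
    by rewrite properEcard sAC cardA.
  exists (z |: A); split; rewrite ?setU11 ?in_setU1 ?xA ?orbT //.
  - by rewrite subUset sub1set zC sAC.
  - by rewrite cardsU1 zA cardA.
  - exact: leq_ltn_trans edgesA more.
have [A [_ sAC cardA edgesA]] := spanning #|comp x|.-1
  ltac:(by rewrite ltn_predL card_mg_comp_gt0).
suff -> : comp x = A by rewrite cardA.
by apply/eqP; rewrite eq_sym eqEcard sAC cardA prednK ?card_mg_comp_gt0 ?leqnn.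
Qed.

Lemma sum_mg_comp_density (R : numFieldType) :
  \sum_(x : V) (#|edges_in (comp x)|%:R / #|comp x|%:R : R) = #|E|%:R.
Proof.
under eq_bigr => x _.
  rewrite -sumr_const mulr_suml.
  under eq_bigl => e do rewrite mem_mg_edges_in_comp.
  over.
rewrite (exchange_big_dep predT) //= -sumr_const; apply: eq_bigr => e _.
under eq_bigr => x /= xC do rewrite mul1r (mg_comp_eq xC).
by rewrite sumr_const -(mulr_natr (_^-1)) mulVf // pnatr_eq0 -lt0n card_mg_comp_gt0.
Qed.

End Components.

Lemma density_gt_unless_small_tree (R : realFieldType) (r : R) (k e : nat) :
  0 < r -> (0 < k)%N -> (k.-1 <= e)%N -> ~~ ((k%:R <= r) && (e == k.-1)%N) ->
  1 - r^-1 < e%:R / k%:R.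
Proof.
move=> r_gt0 k_gt0 edges_ge not_small_tree.
have k_gt0R : 0 < k%:R :> R by rewrite ltr0n.
rewrite ltr_pdivlMr // mulrBl mul1r.
have rV_gt0 : 0 < r^-1 by rewrite invr_gt0.
have rrV : r * r^-1 = 1 by rewrite mulfV // gt_eqF.
have ekR : k%:R <= e%:R + 1 :> R.
  by rewrite natr1 ler_nat -(prednK k_gt0) ltnS.
have [k_le_r | r_lt_k] := leP (k%:R) r.
  have ke : (k <= e)%N.
    rewrite k_le_r /= in not_small_tree.
    by rewrite -(prednK k_gt0) ltn_neqAle edges_ge eq_sym not_small_tree.
  have keR : k%:R <= e%:R :> R by rewrite ler_nat.
  nra.
nra.
Qed.

Theorem lemma10 (R : realFieldType) (r : R) (V E : finType) (s t : E -> V) :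
  1 <= r ->
  (0 < #|V|)%N ->
  (#|E|%:R <= #|V|%:R - #|V|%:R / r) ->
  exists x : V, exists k : nat,
    [/\ (1 <= k)%N, k%:R <= r,
        #|mg_comp s t x| = k &
        #|mg_edges_in s t (mg_comp s t x)| = k.-1].
Proof.
move=> r_ge1 V_gt0 few_edges.
case: (pickP [pred x | (#|mg_comp s t x|%:R <= r) &&
    (#|mg_edges_in s t (mg_comp s t x)| == #|mg_comp s t x|.-1)%N]).
  move=> x /andP[small /eqP tree].
  by exists x, #|mg_comp s t x|; rewrite card_mg_comp_gt0.
move=> no_small_tree; have [x0 _] := card_gt0P V_gt0.
suff : #|V|%:R - #|V|%:R / r < #|E|%:R :> R by rewrite ltNge few_edges.
have -> : #|V|%:R - #|V|%:R / r = \sum_(x : V) (1 - r^-1) :> R.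
  by rewrite sumr_const -[RHS]mulr_natl mulrBr mulr1.
rewrite -(sum_mg_comp_density s t R); apply: ltr_sum => [|x _].
  by apply/hasP; exists x0; rewrite ?mem_index_enum.
apply: density_gt_unless_small_tree (negbT (no_small_tree x)).
- exact: lt_le_trans r_ge1.
- exact: card_mg_comp_gt0.
- exact: mg_comp_connected_edges.
Qed.
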